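(* Let $\Omega$ be a monoid, $A$ an associative algebra, $M$ an $A$-bimodule, $H$ a Hochschild $2$-cocycle and $T=\{T_\alpha\}_{\alpha\in\Omega}$ an $H$-twisted $\mathcal{O}$-operator family. If $H^1_{\mathrm{TwOoperf}}(M,A)=0$, then $T$ is rigid, i.e. every formal one-parameter deformation of $T$ is equivalent to the undeformed deformation $\overline{T}^t = T$.
   Context: $\Omega$ is a semigroup with unit $1$, over a field $\mathbf{k}$ of characteristic $0$. Hochschild $2$-cocycle: bilinear $H:A^{\otimes 2}\to M$ with $a \cdot H (b, c) - H ( a \cdot b, c)+ H (a, b \cdot c) - H (a, b) \cdot c =0$. $H$-twisted $\mathcal{O}$-operator family: linear maps $T_\alpha: M\to A$ with $T_\alpha (u) \cdot T_\beta (v) = T_{\alpha \beta} ( T_\alpha (u) \cdot v + u \cdot T_\beta (v) + H (T_\alpha (u), T_\beta (v)))$. $H^1_{\mathrm{TwOoperf}}(M,A)=Z^1/B^1$ where $Z^1$ is the set of families $f=\{f_\alpha:M\to A\}_{\alpha\in\Omega}$ of linear maps with $T_{\alpha_1}(u_1)\cdot f_{\alpha_2}(u_2) - T_{\alpha_1\alpha_2}(u_1\cdot f_{\alpha_2}(u_2)) - T_{\alpha_1\alpha_2}(H(T_{\alpha_1}u_1, f_{\alpha_2}(u_2))) - f_{\alpha_1\alpha_2}\big(T_{\alpha_1}(u_1)\cdot u_2 + u_1\cdot T_{\alpha_2}(u_2) + H(T_{\alpha_1}u_1,T_{\alpha_2}u_2)\big) + f_{\alpha_1}(u_1)\cdot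 T_{\alpha_2}(u_2) - T_{\alpha_1\alpha_2}(f_{\alpha_1}(u_1)\cdot u_2) - T_{\alpha_1\alpha_2}(H(f_{\alpha_1}(u_1),T_{\alpha_2}u_2)) = 0$ for all $u_1,u_2,\alpha_1,\alpha_2$, and $B^1$ is the set of families $\{(\delta a)_\alpha\}$, $a\in A$, with $(\delta a)_\alpha(u)= T_\alpha (u) \cdot a - T_\alpha (u \cdot a) - T_\alpha (H (T_\alpha u, a)) - a \cdot T_\alpha (u) + T_\alpha (a \cdot u) + T_\alpha (H (a, T_\alpha u))$. A formal one-parameter deformation of $T$ is $T^t=\sum_{i\ge0}t^iT^{(i)}$, $T^{(i)}=\{T^{(i)}_\alpha:M\to A\}$, $T^{(0)}=T$, such that the $\mathbf{k}[[t]]$-linear maps $T^t_\alpha:M[[t]]\to A[[t]]$ satisfy $T^t_\alpha (u) \cdot T^t_\beta (v) = T^t_{\alpha \beta} ( T^t_\alpha (u) \cdot v + u \cdot T^t_\beta (v) + H (T^t_\alpha (u), T^t_\beta (v)))$. Two deformations $T^t,\overline{T}^t$ are equivalent if there are $\theta\in A$, linear maps $\phi_i:A\to A$, $\psi_i:M\to M$ ($i\ge2$) such that $\phi^t = \mathrm{id}_A + t (l^{\mathrm{ad}}_\theta - r^{\mathrm{ad}}_\theta) + \sum_{i\ge2} t^i \phi_i$ and $\psi^t_\alpha = \mathrm{id}_M + t (l_\theta - r_\theta + H (\theta, T_\alpha -) - H (T_\alpha -, \theta) ) + \sum_{i\ge2} t^i \psi_i$ satisfy $\phi^t \circ T^t_\alpha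 = \overline{T}^t_\alpha \circ \psi^t_\alpha$ for all $\alpha$, where $l^{\mathrm{ad}}_\theta(a)=\theta a$, $r^{\mathrm{ad}}_\theta(a)=a\theta$, $l_\theta(u)=\theta\cdot u$, $r_\theta(u)=u\cdot\theta$. *)

From HB Require Import structures.
From mathcomp Require Import all_boot all_order all_algebra.
Set Implicit Arguments. Unset Strict Implicit. Unset Printing Implicit Defensive.
Import GRing.Theory.
Local Open Scope ring_scope.

Definition klinear (k : fieldType) (U V : lmodType k) (f : U -> V) : Prop :=
  forall (c : k) (x y : U), f (c *: x + y) = c *: f x + f y.

Definition is_monoid (Om : Type) (op : Om -> Om -> Om) (e : Om) : Prop :=
  (forall a b c, op a (op b c) = op (op a b) c) /\
  (forall a, op e a = a) /\ (forall a, op a e = a).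

Definition assoc_alg (k : fieldType) (A : lmodType k) (mulA : A -> A -> A) : Prop :=
  (forall a b c, mulA a (mulA b c) = mulA (mulA a b) c) /\
  (forall a, klinear (mulA a)) /\ (forall b, klinear (fun a => mulA a b)).

Definition bimodule (k : fieldType) (A M : lmodType k) (mulA : A -> A -> A)
  (l : A -> M -> M) (r : M -> A -> M) : Prop :=
  (forall a, klinear (l a)) /\ (forall u, klinear (fun a => l a u)) /\
  (forall a, klinear (fun u => r u a)) /\ (forall u, klinear (r u)) /\
  (forall a b u, l (mulA a b) u = l a (l b u)) /\
  (forall a b u, r u (mulA a b) = r (r u a) b) /\
  (forall a b u, r (l a u) b = l a (r u b)).

Definition hoch_2cocycle (k : fieldType) (A M : lmodType k) (mulA : A -> A -> A)
  (l : A -> M -> M) (r : M -> A -> M) (H : A -> A -> M) : Prop :=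
  (forall a, klinear (H a)) /\ (forall b, klinear (fun a => H a b)) /\
  (forall a b c, l a (H b c) - H (mulA a b) c + H a (mulA b c) - r (H a b) c = 0).

Definition twisted_Oop_family (k : fieldType) (A M : lmodType k) (Om : Type)
  (op : Om -> Om -> Om) (mulA : A -> A -> A) (l : A -> M -> M) (r : M -> A -> M)
  (H : A -> A -> M) (T : Om -> M -> A) : Prop :=
  (forall al, klinear (T al)) /\
  (forall al be u v, mulA (T al u) (T be v) =
      T (op al be) (l (T al u) v + r u (T be v) + H (T al u) (T be v))).

Definition Z1 (k : fieldType) (A M : lmodType k) (Om : Type)
  (op : Om -> Om -> Om) (mulA : A -> A -> A) (l : A -> M -> M) (r : M -> A -> M)
  (H : A -> A -> M) (T : Om -> M -> A) (f : Om -> M -> A) : Prop :=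
  (forall al, klinear (f al)) /\
  (forall a1 a2 u1 u2,
     mulA (T a1 u1) (f a2 u2) - T (op a1 a2) (r u1 (f a2 u2))
     - T (op a1 a2) (H (T a1 u1) (f a2 u2))
     - f (op a1 a2) (l (T a1 u1) u2 + r u1 (T a2 u2) + H (T a1 u1) (T a2 u2))
     + mulA (f a1 u1) (T a2 u2) - T (op a1 a2) (l (f a1 u1) u2)
     - T (op a1 a2) (H (f a1 u1) (T a2 u2)) = 0).

Definition delta0 (k : fieldType) (A M : lmodType k) (Om : Type)
  (mulA : A -> A -> A) (l : A -> M -> M) (r : M -> A -> M)
  (H : A -> A -> M) (T : Om -> M -> A) (a : A) : Om -> M -> A :=
  fun al u =>
    mulA (T al u) a - T al (r u a) - T al (H (T al u) a)
    - mulA a (T al u) + T al (l a u) + T al (H a (T al u)).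

Definition B1 (k : fieldType) (A M : lmodType k) (Om : Type)
  (mulA : A -> A -> A) (l : A -> M -> M) (r : M -> A -> M)
  (H : A -> A -> M) (T : Om -> M -> A) (f : Om -> M -> A) : Prop :=
  exists a : A, forall al u, f al u = delta0 mulA l r H T a al u.

Definition H1_vanishes (k : fieldType) (A M : lmodType k) (Om : Type)
  (op : Om -> Om -> Om) (mulA : A -> A -> A) (l : A -> M -> M) (r : M -> A -> M)
  (H : A -> A -> M) (T : Om -> M -> A) : Prop :=
  forall f : Om -> M -> A, Z1 op mulA l r H T f -> B1 mulA l r H T f.

(* A formal one-parameter deformation, given by its coefficients
   Tt i al = T^{(i)}_al; the defining identity in A[[t]] is written
   coefficientwise (coefficient of t^n), with all maps extended
   k[[t]]-(bi)linearly. *)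
Definition formal_deformation (k : fieldType) (A M : lmodType k) (Om : Type)
  (op : Om -> Om -> Om) (mulA : A -> A -> A) (l : A -> M -> M) (r : M -> A -> M)
  (H : A -> A -> M) (T : Om -> M -> A) (Tt : nat -> Om -> M -> A) : Prop :=
  (forall al, Tt 0%N al = T al) /\
  (forall i al, klinear (Tt i al)) /\
  (forall (n : nat) al be u v,
     \sum_(i < n.+1) mulA (Tt i al u) (Tt (n - i)%N be v) =
     \sum_(i < n.+1) Tt i (op al be)
        (l (Tt (n - i)%N al u) v + r u (Tt (n - i)%N be v)
         + \sum_(j < (n - i).+1) H (Tt j al u) (Tt (n - i - j)%N be v))).

Definition const_deformation (A M : Type) (Om : Type) (zero : A)
  (T : Om -> M -> A) : nat -> Om -> M -> A :=
  fun i al u => if i is 0%N then T al u else zero.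

(* coefficients of phi^t = id + t (l^ad_theta - r^ad_theta) + sum_{i>=2} t^i phi_i *)
Definition phi_coef (k : fieldType) (A : lmodType k) (mulA : A -> A -> A)
  (theta : A) (phi : nat -> A -> A) : nat -> A -> A :=
  fun i a => match i with
             | 0%N => a
             | 1%N => mulA theta a - mulA a theta
             | _ => phi i a end.

(* coefficients of psi^t_al = id + t (l_theta - r_theta + H(theta, T_al -)
   - H(T_al -, theta)) + sum_{i>=2} t^i psi_i *)
Definition psi_coef (k : fieldType) (A M : lmodType k) (Om : Type)
  (l : A -> M -> M) (r : M -> A -> M) (H : A -> A -> M) (T : Om -> M -> A)
  (theta : A) (psi : nat -> Om -> M -> M) : nat -> Om -> M -> M :=
  fun i al u => match i with
             | 0%N => u
             | 1%N => l theta u - r u theta + H theta (T al u) - H (T al u) theta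
             | _ => psi i al u end.

(* equivalence of two deformations Tt and Tb; phi^t o Tt_al = Tb_al o psi^t_al
   written coefficientwise *)
Definition equiv_deformations (k : fieldType) (A M : lmodType k) (Om : Type)
  (mulA : A -> A -> A) (l : A -> M -> M) (r : M -> A -> M)
  (H : A -> A -> M) (T : Om -> M -> A) (Tt Tb : nat -> Om -> M -> A) : Prop :=
  exists (theta : A) (phi : nat -> A -> A) (psi : nat -> Om -> M -> M),
    (forall i, (2 <= i)%N -> klinear (phi i)) /\
    (forall i al, (2 <= i)%N -> klinear (psi i al)) /\
    (forall (n : nat) al u,
       \sum_(i < n.+1) phi_coef mulA theta phi i (Tt (n - i)%N al u) =
       \sum_(i < n.+1) Tb i al (psi_coef l r H T theta psi (n - i)%N al u)).

From HB Require Import structures.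
From Stdlib Require Import ClassicalEpsilon.
From mathcomp Require Import all_boot all_order all_algebra.
Set Implicit Arguments. Unset Strict Implicit. Unset Printing Implicit Defensive.
Import GRing.Theory.
Local Open Scope ring_scope.

(* Work in the unitalization k + A + M of the H-twisted semidirect product,
   (c, a, u) (c', a', u') = (c c', c a' + c' a + a a', c u' + c' u + a.u' + u.a' + H(a, a')),
   which is associative exactly because H is a Hochschild 2-cocycle.  The
   O-operator identity says that the graphs {T_al u + u} multiply into one
   another, and a formal deformation says the same of the series
   Y_al(u) = u + T^t_al(u).  Conjugate these series by a unipotent
   G = 1 + c_1 t + c_2 t^2 + ... with c_i in A, chosen inductively: if the
   conjugated series lie in the graph of T up to order n - 1, their defect at
   order n is a 1-cocycle, hence the coboundary of some a since H^1 = 0, and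
   replacing c_n by c_n + a removes it.  The A-part of G (-) G^-1 and the
   M-part of G Y_al(u) G^-1 are then phi^t and psi^t_al, with theta = c_1. *)

Section KLinear.
Variables (k : fieldType) (U V : lmodType k) (f : U -> V).
Hypothesis f_lin : klinear f.

Lemma klinearD x y : f (x + y) = f x + f y.
Proof. by have := f_lin 1 x y; rewrite !scale1r. Qed.

Lemma klinear0 : f 0 = 0.
Proof. by apply: (addrI (f 0)); rewrite -klinearD !addr0. Qed.

Lemma klinearZ c x : f (c *: x) = c *: f x.
Proof. by have := f_lin c x 0; rewrite !addr0 klinear0 addr0. Qed.

Lemma klinearN x : f (- x) = - f x.
Proof. by rewrite -scaleN1r klinearZ scaleN1r. Qed.

End KLinear.

Definition kbilinear (k : fieldType) (U V W : lmodType k) (f : U -> V -> W) : Prop :=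
  (forall x, klinear (f x)) /\ (forall y, klinear (f^~ y)).

Section KBilinear.
Variables (k : fieldType) (U V W : lmodType k) (f : U -> V -> W).
Hypothesis f_bil : kbilinear f.

Lemma kbilinDl x x' y : f (x + x') y = f x y + f x' y.
Proof. exact: (klinearD (f_bil.2 y)). Qed.
Lemma kbilinDr x y y' : f x (y + y') = f x y + f x y'.
Proof. exact: (klinearD (f_bil.1 x)). Qed.
Lemma kbilinZl c x y : f (c *: x) y = c *: f x y.
Proof. exact: (klinearZ (f_bil.2 y)). Qed.
Lemma kbilinZr c x y : f x (c *: y) = c *: f x y.
Proof. exact: (klinearZ (f_bil.1 x)). Qed.
Lemma kbilinNl x y : f (- x) y = - f x y.
Proof. exact: (klinearN (f_bil.2 y)). Qed.
Lemma kbilinNr x y : f x (- y) = - f x y.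
Proof. exact: (klinearN (f_bil.1 x)). Qed.
Lemma kbilin0l y : f 0 y = 0.
Proof. exact: (klinear0 (f_bil.2 y)). Qed.
Lemma kbilin0r x : f x 0 = 0.
Proof. exact: (klinear0 (f_bil.1 x)). Qed.

End KBilinear.

Ltac kbilin_expand f_bil :=
  rewrite ?(kbilinDl f_bil) ?(kbilinDr f_bil) ?(kbilinZl f_bil) ?(kbilinZr f_bil)
          ?(kbilinNl f_bil) ?(kbilinNr f_bil) ?(kbilin0l f_bil) ?(kbilin0r f_bil).

Lemma zmod_cancel_next (V : zmodType) (x y s t : V) : y = - x -> s = t -> x + (y + s) = t.
Proof. by move=> -> <-; rewrite addNKr. Qed.
Lemma zmod_cancel_last (V : zmodType) (x y t : V) : y = - x -> t = 0 -> x + y = t.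
Proof. by move=> -> ->; rewrite subrr. Qed.
Lemma zmod_skip_next (V : zmodType) (x y s t : V) : x + s = t - y -> x + (y + s) = t.
Proof. by rewrite addrCA => ->; rewrite addrC subrK. Qed.

(* [zmod_ac] proves an identity between sums of signed atoms in an abelian
   group: it moves everything to the left of [= 0] and cancels each summand
   against an opposite one. *)
Ltac zmod_normalize := rewrite ?opprD ?opprK ?oppr0 -?addrA ?addr0 ?add0r.
Ltac zmod_cancel_head :=
  first [ apply: zmod_cancel_next; [rewrite ?opprK; reflexivity |]
        | apply: zmod_cancel_last; [rewrite ?opprK; reflexivity |]
        | apply: zmod_skip_next; zmod_cancel_head ].
Ltac zmod_ac := apply: subr0_eq; zmod_normalize;
  repeat (first [ reflexivity | zmod_cancel_head; apply: subr0_eq; zmod_normalize ]).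

Section TruncatedPoly.
Variable R : nzRingType.
Implicit Types (p q : {poly R}) (c : nat -> R).

Definition eq_upto n p q := forall i, (i <= n)%N -> p`_i = q`_i.

Lemma eq_upto_sym n p q : eq_upto n p q -> eq_upto n q p.
Proof. by move=> e i /e. Qed.

Lemma eq_upto_trans n p q s : eq_upto n p q -> eq_upto n q s -> eq_upto n p s.
Proof. by move=> e1 e2 i hi; rewrite e1 // e2. Qed.

Lemma eq_upto_le m n p q : (m <= n)%N -> eq_upto n p q -> eq_upto m p q.
Proof. by move=> hmn e i hi; apply: e; apply: leq_trans hmn. Qed.

Lemma eq_upto_mull n p q s : eq_upto n p q -> eq_upto n (s * p) (s * q).
Proof.
move=> e i hi; rewrite !coefM; apply: eq_bigr => j _; rewrite e //.
exact: leq_trans (leq_subr _ _) hi.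
Qed.

Lemma eq_upto_mulr n p q s : eq_upto n p q -> eq_upto n (p * s) (q * s).
Proof.
move=> e i hi; rewrite !coefM; apply: eq_bigr => j _; rewrite e //.
by apply: leq_trans hi; rewrite -ltnS.
Qed.

Lemma eq_upto_mul n p q p' q' :
  eq_upto n p q -> eq_upto n p' q' -> eq_upto n (p * p') (q * q').
Proof. by move=> e e'; apply: eq_upto_trans (eq_upto_mulr _ e) (eq_upto_mull _ e'). Qed.

Lemma eq_upto_inv_uniq n g d1 d2 :
  eq_upto n (g * d1) 1 -> eq_upto n (d2 * g) 1 -> eq_upto n d1 d2.
Proof.
move=> h1 h2; apply: (@eq_upto_trans _ _ (d2 * g * d1)).
  by apply: eq_upto_sym; rewrite -[X in eq_upto _ _ X]mul1r; apply: eq_upto_mulr.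
by rewrite -mulrA -[X in eq_upto _ _ X]mulr1; apply: eq_upto_mull.
Qed.

Lemma eq_upto_XnM0 n m p : (n < m)%N -> eq_upto n ('X^m * p) 0.
Proof. by move=> hnm i hi; rewrite coefXnM coef0 ifT //; apply: leq_ltn_trans hnm. Qed.

Lemma coef_sum_XnM n i (F : nat -> {poly R}) : (i <= n)%N ->
  (\sum_(j < n.+1) 'X^j * F j)`_i = \sum_(j < i.+1) (F j)`_(i - j).
Proof.
elim: n => [|n IH] hi.
  by move: hi; rewrite leqn0 => /eqP ->; rewrite !big_ord1 coefXnM.
rewrite big_ord_recr coefD /=; case: (ltngtP i n.+1) => h.
- by rewrite IH // coefXnM h addr0.
- by move: hi; rewrite leqNgt h.
- subst i; rewrite coefXnM ltnn subnn [RHS]big_ord_recr /= subnn; congr (_ + _).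
  rewrite coef_sum; apply: eq_bigr => j _; rewrite coefXnM.
  by rewrite ltnNge ltnW // ltnS ltn_ord.
Qed.

(* [unip N c] is 1 + c_1 t + ... + c_N t^N and [unip_inv N c] its inverse
   modulo t^(N+1), a truncated geometric series. *)
Definition unip_tail N c : {poly R} := 'X * \poly_(i < N) (- c i.+1).
Definition unip N c := 1 - unip_tail N c.
Definition unip_inv N c := \sum_(j < N.+1) unip_tail N c ^+ j.
Definition uconj N c p := unip N c * p * unip_inv N c.

Lemma unip_invP N c :
  eq_upto N (unip N c * unip_inv N c) 1 /\ eq_upto N (unip_inv N c * unip N c) 1.
Proof.
set y := unip_tail N c.
have y_small : eq_upto N (1 - y ^+ N.+1) 1.
  have -> : y ^+ N.+1 = 'X^(N.+1) * (\poly_(i < N) (- c i.+1)) ^+ N.+1.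
    by rewrite /y /unip_tail exprMn_comm //; apply/commr_sym/commr_polyX.
  by move=> i hi; rewrite coefB (eq_upto_XnM0 _ (ltnSn N)) // coef0 subr0.
have y_comm : GRing.comm (y - 1) (\sum_(j < N.+1) y ^+ j).
  apply: commr_sum => j _; apply/commr_sym/commrB; last exact: commr1.
  exact/commr_sym/commrX/commr_refl.
split.
  by rewrite /unip /unip_inv -/y -opprB mulNr -subrX1 opprB.
by rewrite /unip /unip_inv -/y -opprB mulrN -y_comm -subrX1 opprB.
Qed.

Lemma coef_unip N c i :
  (unip N c)`_i = if i == 0%N then 1 else if (i <= N)%N then c i else 0.
Proof.
rewrite coefB coef1 coefXM; case: i => [|i] /=; first by rewrite subr0.
by rewrite coef_poly sub0r; case: ifP; rewrite ?opprK ?oppr0.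
Qed.

Lemma coef0_unip N c : (unip N c)`_0 = 1.
Proof. by rewrite coef_unip. Qed.

Lemma coef0_unip_inv N c : (unip_inv N c)`_0 = 1.
Proof.
have := (unip_invP N c).1 0%N (leq0n _).
by rewrite coef0M coef0_unip mul1r coef1.
Qed.

Lemma coef1_unip_inv N c : (0 < N)%N -> (unip_inv N c)`_1 = - c 1%N.
Proof.
move=> N_gt0; have := (unip_invP N c).1 1%N N_gt0.
rewrite coefM big_ord_recr big_ord1 /= subn0 subnn coef0_unip coef_unip /= N_gt0.
by rewrite coef0_unip_inv coef1 mul1r mulr1 => /eqP; rewrite addr_eq0 => /eqP.
Qed.

Section Ext.
Variables (N : nat) (c c' : nat -> R).
Hypothesis ecc' : forall i, (0 < i <= N)%N -> c i = c' i.

Lemma unip_tail_ext : unip_tail N c = unip_tail N c'.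
Proof. by congr (_ * _); apply: eq_poly => i hi; rewrite ecc'. Qed.

Lemma uconj_ext p : uconj N c p = uconj N c' p.
Proof. by rewrite /uconj /unip /unip_inv unip_tail_ext. Qed.

End Ext.

Lemma unip_trunc m N c : (m <= N)%N -> eq_upto m (unip N c) (unip m c).
Proof.
move=> hmN i hi; rewrite !coef_unip; case: (i == 0%N) => //.
by rewrite hi (leq_trans hi hmN).
Qed.

Lemma unip_inv_trunc m N c : (m <= N)%N -> eq_upto m (unip_inv N c) (unip_inv m c).
Proof.
move=> hmN; apply: eq_upto_sym; apply: (@eq_upto_inv_uniq _ (unip m c)).
  exact: (unip_invP m c).1.
apply: (@eq_upto_trans _ _ (unip_inv N c * unip N c)).
  exact/eq_upto_mull/eq_upto_sym/unip_trunc.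
exact: eq_upto_le hmN (unip_invP N c).2.
Qed.

Lemma uconj_trunc m N c p q :
  (m <= N)%N -> eq_upto m p q -> eq_upto m (uconj N c p) (uconj m c q).
Proof.
move=> hmN e; apply: eq_upto_mul; first apply: eq_upto_mul => //.
- exact: unip_trunc.
- exact: unip_inv_trunc.
Qed.

Lemma uconjM N c p q : eq_upto N (uconj N c p * uconj N c q) (uconj N c (p * q)).
Proof.
have -> : uconj N c p * uconj N c q =
    unip N c * p * (unip_inv N c * unip N c) * (q * unip_inv N c) by rewrite /uconj !mulrA.
have -> : uconj N c (p * q) = unip N c * p * 1 * (q * unip_inv N c) by rewrite /uconj mulr1 !mulrA.
exact/eq_upto_mulr/eq_upto_mull/(unip_invP N c).2.
Qed.

Lemma coef0_uconj N c p : (uconj N c p)`_0 = p`_0.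
Proof. by rewrite !coef0M coef0_unip coef0_unip_inv mul1r mulr1. Qed.

Lemma coef1_uconj N c p : (0 < N)%N ->
  (uconj N c p)`_1 = c 1%N * p`_0 + p`_1 - p`_0 * c 1%N.
Proof.
move=> N_gt0; rewrite coefM big_ord_recr big_ord1 /= subn0 subnn coef0M coef0_unip.
rewrite coef1_unip_inv // coefM big_ord_recr big_ord1 /= subn0 subnn coef0_unip.
rewrite coef0_unip_inv coef_unip /= N_gt0 !mul1r mulr1 mulrN; zmod_ac.
Qed.

Lemma uconj_XnM N c j p : uconj N c ('X^j * p) = 'X^j * uconj N c p.
Proof. by rewrite /uconj mulrA (commr_polyXn (unip N c) j) -!mulrA. Qed.

Lemma uconj_CM N c a p : (forall x, a * x = x * a) ->
  uconj N c (a%:P * p) = a%:P * uconj N c p.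
Proof.
move=> a_central; have aP_comm q : q * a%:P = a%:P * q.
  by apply/polyP => i; rewrite coefMC coefCM a_central.
by rewrite /uconj mulrA aP_comm -!mulrA.
Qed.

Lemma uconjD N c p q : uconj N c (p + q) = uconj N c p + uconj N c q.
Proof. by rewrite /uconj mulrDr mulrDl. Qed.

Lemma uconj_sum N c I (s : seq I) (F : I -> {poly R}) :
  uconj N c (\sum_(i <- s) F i) = \sum_(i <- s) uconj N c (F i).
Proof.
elim/big_rec2: _ => [|i y1 y2 _ <-]; last by rewrite uconjD.
by rewrite /uconj mulr0 mul0r.
Qed.

Lemma coef_uconj_ideal (P : R -> Prop) N c p :
  P 0 -> (forall x y, P x -> P y -> P (x + y)) ->
  (forall x y, P x -> P (x * y)) -> (forall x y, P y -> P (x * y)) ->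
  (forall i, P p`_i) -> forall i, P (uconj N c p)`_i.
Proof.
move=> P0 PD PMl PMr Pp i; rewrite coefM; apply: big_ind => // j _; apply: PMl.
by rewrite coefM; apply: big_ind => // j' _; apply: PMr.
Qed.

Section Update.
Variables (N : nat) (c c' : nat -> R) (a : R).
Hypotheses (N_gt0 : (0 < N)%N) (c'N : c' N = c N + a)
  (c'_lt : forall i, (i < N)%N -> c' i = c i).

Lemma unip_update : unip N c' = unip N c + 'X^N * a%:P.
Proof.
apply/polyP => i; rewrite coef_unip [RHS]coefD coef_unip coefXnM coefC.
case: (ltngtP i N) => hi.
- by rewrite addr0 c'_lt.
- by rewrite subn_eq0 leqNgt hi /= addr0.
- by rewrite hi subnn eqxx (gtn_eqF N_gt0) c'N.
Qed.

Lemma unip_inv_update : eq_upto N (unip_inv N c') (unip_inv N c - 'X^N * a%:P).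
Proof.
set d := 'X^N * a%:P.
apply: eq_upto_sym; apply: (@eq_upto_inv_uniq _ (unip N c')); last first.
  by rewrite -?unip_update; case: (unip_invP N c').
have d_unip_l : eq_upto N (unip N c * d) d.
  move=> i hi; rewrite /d mulrA (commr_polyXn (unip N c) N) -mulrA !coefXnM.
  case: ifP => // /negbT; rewrite -leqNgt => hNi.
  by rewrite coefMC coefC (_ : i - N = 0)%N ?coef0_unip ?mul1r //; apply/eqP; rewrite subn_eq0.
have d_unip_r : eq_upto N (d * unip_inv N c) d.
  move=> i hi; rewrite /d -mulrA !coefXnM.
  case: ifP => // /negbT; rewrite -leqNgt => hNi.
  by rewrite coefCM coefC (_ : i - N = 0)%N ?coef0_unip_inv ?mulr1 //; apply/eqP; rewrite subn_eq0.
have d_sq : eq_upto N (d * d) 0.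
  have -> : d * d = 'X^(N + N) * (a%:P * a%:P).
    by rewrite /d exprD -!mulrA; congr (_ * _); rewrite mulrA (commr_polyXn _ N) -mulrA.
  by apply: eq_upto_XnM0; rewrite -{1}[N]addn0 ltn_add2l.
move=> i hi; rewrite unip_update mulrDl !mulrBr !coefD !coefN.
by rewrite (unip_invP N c).1 // d_unip_l // d_unip_r // d_sq // coef0 subr0 subrK.
Qed.

Lemma coef_uconj_update p :
  (uconj N c' p)`_N = (uconj N c p)`_N + a * p`_0 - p`_0 * a.
Proof.
rewrite /uconj (eq_upto_mull _ unip_inv_update) // unip_update.
set d := 'X^N * a%:P; set g := unip N c; set h := unip_inv N c.
have dph : (d * p * h)`_N = a * p`_0.
  by rewrite /d -!mulrA coefXnM ltnn subnn !coef0M coefC /= coef0_unip_inv mulr1.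
have gpd : (g * p * d)`_N = p`_0 * a.
  rewrite /d mulrA (commr_polyXn _ N) -mulrA coefXnM ltnn subnn coef0M coefC /=.
  by rewrite coef0M coef0_unip mul1r.
have dpd : (d * p * d)`_N = 0.
  have -> : d * p * d = 'X^(N + N) * (a%:P * p * a%:P).
    by rewrite /d exprD -!mulrA; congr (_ * _); rewrite !mulrA (commr_polyXn _ N) -!mulrA.
  by rewrite coefXnM -{1}[N]addn0 ltn_add2l N_gt0.
clearbody d g h; rewrite mulrDl !mulrDl !mulrBr !coefD !coefN dph gpd dpd subr0; zmod_ac.
Qed.

End Update.

End TruncatedPoly.

Section TwistedSemidirect.
Variables (k : fieldType) (A M : lmodType k) (mulA : A -> A -> A)
  (l : A -> M -> M) (r : M -> A -> M) (H : A -> A -> M).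
Hypotheses (HA : assoc_alg mulA) (HM : bimodule mulA l r) (HH : hoch_2cocycle mulA l r H).

Lemma mulA_bilin : kbilinear mulA. Proof. by case: HA => _ []. Qed.
Lemma l_bilin : kbilinear l. Proof. by case: HM => ? []. Qed.
Lemma r_bilin : kbilinear r. Proof. by case: HM => _ [_ [? []]]. Qed.
Lemma H_bilin : kbilinear H. Proof. by case: HH => ? []. Qed.

Ltac bilin_expand := repeat progress (kbilin_expand mulA_bilin; kbilin_expand l_bilin;
  kbilin_expand r_bilin; kbilin_expand H_bilin;
  rewrite ?scalerDr ?scalerDl ?scalerA ?scaler0 ?scale0r ?scale1r ?scalerN ?scaleNr).

Definition sdp := (k * A * M)%type.
HB.instance Definition _ := GRing.Zmodule.on sdp.

Definition kpart (x : sdp) : k := x.1.1.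
Definition apart (x : sdp) : A := x.1.2.
Definition mpart (x : sdp) : M := x.2.

Definition sdp_mul (x y : sdp) : sdp :=
  (kpart x * kpart y,
   kpart x *: apart y + kpart y *: apart x + mulA (apart x) (apart y),
   kpart x *: mpart y + kpart y *: mpart x + l (apart x) (mpart y)
     + r (mpart x) (apart y) + H (apart x) (apart y)).
Definition sdp_one : sdp := (1, 0, 0).

Lemma sdp_eq (x y : sdp) :
  kpart x = kpart y -> apart x = apart y -> mpart x = mpart y -> x = y.
Proof.
by case: x => [[? ?] ?]; case: y => [[? ?] ?]; rewrite /kpart /apart /mpart /= => -> -> ->.
Qed.

Lemma kpartD x y : kpart (x + y) = kpart x + kpart y. Proof. by []. Qed.
Lemma apartD x y : apart (x + y) = apart x + apart y. Proof. by []. Qed.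
Lemma mpartD x y : mpart (x + y) = mpart x + mpart y. Proof. by []. Qed.
Lemma kpartN x : kpart (- x) = - kpart x. Proof. by []. Qed.
Lemma apartN x : apart (- x) = - apart x. Proof. by []. Qed.
Lemma mpartN x : mpart (- x) = - mpart x. Proof. by []. Qed.
Lemma kpart0 : kpart 0 = 0. Proof. by []. Qed.
Lemma apart0 : apart 0 = 0. Proof. by []. Qed.
Lemma mpart0 : mpart 0 = 0. Proof. by []. Qed.
Lemma kpart_mul x y : kpart (sdp_mul x y) = kpart x * kpart y. Proof. by []. Qed.
Lemma apart_mul x y : apart (sdp_mul x y) =
  kpart x *: apart y + kpart y *: apart x + mulA (apart x) (apart y).
Proof. by []. Qed.
Lemma mpart_mul x y : mpart (sdp_mul x y) = kpart x *: mpart y + kpart y *: mpart x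
  + l (apart x) (mpart y) + r (mpart x) (apart y) + H (apart x) (apart y).
Proof. by []. Qed.

Definition sdp_partE := (kpartD, apartD, mpartD, kpartN, apartN, mpartN,
  kpart0, apart0, mpart0, kpart_mul, apart_mul, mpart_mul).

Ltac sdp_simpl := rewrite ?sdp_partE; bilin_expand;
  rewrite ?mul0r ?mulr0 ?mul1r ?mulr1 ?addr0 ?add0r ?subr0 ?sub0r ?oppr0.

Lemma sdp_mulA : associative sdp_mul.
Proof.
move=> x y z; apply: sdp_eq; rewrite /= ?sdp_partE.
- exact: mulrA.
- case: HA => mulAA _; bilin_expand; rewrite mulAA (mulrC (kpart z)) (mulrC (kpart z)).
  zmod_ac.
- case: HM => _ [_ [_ [_ [lM [rM lr]]]]]; case: HH => _ [_ H_cocycle].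
  have H_Ml a b c : H (mulA a b) c = l a (H b c) + H a (mulA b c) - r (H a b) c.
    by apply/subr0_eq/oppr_inj; rewrite oppr0 -[RHS](H_cocycle a b c); zmod_ac.
  bilin_expand; rewrite !lM !rM !lr !H_Ml (mulrC (kpart z)) (mulrC (kpart z)).
  zmod_ac.
Qed.

Lemma sdp_mul1 : left_id sdp_one sdp_mul.
Proof. by move=> x; apply: sdp_eq; sdp_simpl. Qed.
Lemma sdp_mulr1 : right_id sdp_one sdp_mul.
Proof. by move=> x; apply: sdp_eq; sdp_simpl. Qed.
Lemma sdp_mulDl : left_distributive sdp_mul +%R.
Proof. by move=> x y z; apply: sdp_eq; sdp_simpl; rewrite ?mulrDl; zmod_ac. Qed.
Lemma sdp_mulDr : right_distributive sdp_mul +%R.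
Proof. by move=> x y z; apply: sdp_eq; sdp_simpl; rewrite ?mulrDr; zmod_ac. Qed.
Lemma sdp_one_neq0 : sdp_one != 0.
Proof. by apply/eqP => /(congr1 kpart)/eqP; rewrite oner_eq0. Qed.

HB.instance Definition _ := GRing.Zmodule_isNzRing.Build sdp
  sdp_mulA sdp_mul1 sdp_mulr1 sdp_mulDl sdp_mulDr sdp_one_neq0.

Definition inK (c : k) : sdp := (c, 0, 0).
Definition inA (a : A) : sdp := (0, a, 0).
Definition inM (u : M) : sdp := (0, 0, u).

Lemma kpartM (x y : sdp) : kpart (x * y) = kpart x * kpart y. Proof. by []. Qed.
Lemma apartM (x y : sdp) : apart (x * y) =
  kpart x *: apart y + kpart y *: apart x + mulA (apart x) (apart y).
Proof. by []. Qed.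
Lemma mpartM (x y : sdp) : mpart (x * y) = kpart x *: mpart y + kpart y *: mpart x
  + l (apart x) (mpart y) + r (mpart x) (apart y) + H (apart x) (apart y).
Proof. by []. Qed.
Lemma kpart1 : kpart 1 = 1. Proof. by []. Qed.
Lemma apart1 : apart 1 = 0. Proof. by []. Qed.
Lemma mpart1 : mpart 1 = 0. Proof. by []. Qed.
Lemma kpart_inK c : kpart (inK c) = c. Proof. by []. Qed.
Lemma apart_inK c : apart (inK c) = 0. Proof. by []. Qed.
Lemma mpart_inK c : mpart (inK c) = 0. Proof. by []. Qed.
Lemma kpart_inA a : kpart (inA a) = 0. Proof. by []. Qed.
Lemma apart_inA a : apart (inA a) = a. Proof. by []. Qed.
Lemma mpart_inA a : mpart (inA a) = 0. Proof. by []. Qed.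
Lemma kpart_inM u : kpart (inM u) = 0. Proof. by []. Qed.
Lemma apart_inM u : apart (inM u) = 0. Proof. by []. Qed.
Lemma mpart_inM u : mpart (inM u) = u. Proof. by []. Qed.

Definition sdp_ringE := (kpartM, apartM, mpartM, kpart1, apart1, mpart1,
  kpart_inK, apart_inK, mpart_inK, kpart_inA, apart_inA, mpart_inA,
  kpart_inM, apart_inM, mpart_inM).

Ltac sdp_ring_simpl := repeat progress (rewrite ?sdp_ringE; sdp_simpl).

Lemma kpart_sum I (s : seq I) (F : I -> sdp) :
  kpart (\sum_(i <- s) F i) = \sum_(i <- s) kpart (F i).
Proof. by elim/big_rec2: _ => [|i y1 y2 _ <-]. Qed.
Lemma apart_sum I (s : seq I) (F : I -> sdp) :
  apart (\sum_(i <- s) F i) = \sum_(i <- s) apart (F i).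
Proof. by elim/big_rec2: _ => [|i y1 y2 _ <-]. Qed.
Lemma mpart_sum I (s : seq I) (F : I -> sdp) :
  mpart (\sum_(i <- s) F i) = \sum_(i <- s) mpart (F i).
Proof. by elim/big_rec2: _ => [|i y1 y2 _ <-]. Qed.

Lemma inK_central c (x : sdp) : inK c * x = x * inK c.
Proof. by apply: sdp_eq; sdp_ring_simpl; rewrite ?(mulrC c). Qed.
Lemma inA_lin c a b : inA (c *: a + b) = inK c * inA a + inA b.
Proof. by apply: sdp_eq; sdp_ring_simpl. Qed.
Lemma inM_lin c u v : inM (c *: u + v) = inK c * inM u + inM v.
Proof. by apply: sdp_eq; sdp_ring_simpl. Qed.
Lemma apart_inKM c x : apart (inK c * x) = c *: apart x.
Proof. by sdp_ring_simpl. Qed.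
Lemma mpart_inKM c x : mpart (inK c * x) = c *: mpart x.
Proof. by sdp_ring_simpl. Qed.

Section Deformation.
Variables (Om : Type) (op : Om -> Om -> Om) (T : Om -> M -> A).
Hypothesis HT : twisted_Oop_family op mulA l r H T.
Variable Tt : nat -> Om -> M -> A.
Hypothesis HTt : formal_deformation op mulA l r H T Tt.

Lemma T_lin al : klinear (T al). Proof. by case: HT. Qed.
Lemma Tt_lin i al : klinear (Tt i al). Proof. by case: HTt => _ []. Qed.
Lemma Tt0 al u : Tt 0 al u = T al u. Proof. by case: HTt => ->. Qed.

Ltac T_expand := repeat progress rewrite ?(klinearD (T_lin _)) ?(klinearN (T_lin _))
  ?(klinearZ (T_lin _)) ?(klinear0 (T_lin _)).

Definition graph_defect al (x : sdp) : A := apart x - T al (mpart x).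

Lemma graph_defectD al x y :
  graph_defect al (x + y) = graph_defect al x + graph_defect al y.
Proof. by rewrite /graph_defect apartD mpartD; T_expand; zmod_ac. Qed.

Lemma graph_defect_sum al I (s : seq I) (F : I -> sdp) :
  graph_defect al (\sum_(i <- s) F i) = \sum_(i <- s) graph_defect al (F i).
Proof.
elim/big_rec2: _ => [|i y1 y2 _ <-]; last exact: graph_defectD.
by rewrite /graph_defect; T_expand; rewrite subr0.
Qed.

Lemma graph_defect_inKM al c x : graph_defect al (inK c * x) = c *: graph_defect al x.
Proof. by rewrite /graph_defect apart_inKM mpart_inKM; T_expand; rewrite scalerBr. Qed.

(* Write [apart x = T (mpart x) + e]; the O-operator identity absorbs the
   product of the two graph components. *)
Lemma graph_defectM al be x y : kpart x = 0 -> kpart y = 0 ->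
  graph_defect (op al be) (x * y) =
    mulA (graph_defect al x) (apart y) + mulA (apart x) (graph_defect be y)
    - mulA (graph_defect al x) (graph_defect be y)
    - T (op al be) (l (graph_defect al x) (mpart y) + r (mpart x) (graph_defect be y)
        + H (graph_defect al x) (apart y) + H (apart x) (graph_defect be y)
        - H (graph_defect al x) (graph_defect be y)).
Proof.
move=> x_k0 y_k0; rewrite /graph_defect apartM mpartM x_k0 y_k0 !scale0r !add0r.
have ex : apart x = T al (mpart x) + (apart x - T al (mpart x)) by rewrite addrC subrK.
have ey : apart y = T be (mpart y) + (apart y - T be (mpart y)) by rewrite addrC subrK.
move: (apart x - _) (apart y - _) ex ey => e f -> ->.
case: HT => _ T_mul; bilin_expand; rewrite T_mul; T_expand; zmod_ac.
Qed.

(* The truncation at order N of the series u + T^t_al u in sdp[t]. *)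
Definition gseries N al u : {poly sdp} := (inM u)%:P + \poly_(i < N.+1) inA (Tt i al u).

Lemma coef_gseries N al u i : (i <= N)%N ->
  (gseries N al u)`_i = (if i == 0%N then inM u else 0) + inA (Tt i al u).
Proof. by move=> hi; rewrite coefD coefC coef_poly ltnS hi. Qed.

Lemma coef0_gseries N al u : (gseries N al u)`_0 = inA (T al u) + inM u.
Proof. by rewrite coef_gseries // Tt0 addrC. Qed.

Lemma apart_gseries N al u i : (i <= N)%N -> apart ((gseries N al u)`_i) = Tt i al u.
Proof. by move=> hi; rewrite coef_gseries // apartD apart_inA; case: ifP; rewrite add0r. Qed.

Lemma mpart_gseries N al u i : (i <= N)%N ->
  mpart ((gseries N al u)`_i) = if i == 0%N then u else 0.
Proof. by move=> hi; rewrite coef_gseries // mpartD mpart_inA addr0; case: ifP. Qed.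

Lemma kpart_gseries N al u i : kpart ((gseries N al u)`_i) = 0.
Proof.
rewrite coefD coefC coef_poly kpartD.
by case: (i == 0%N); case: (i < N.+1)%N; rewrite ?kpart_inM ?kpart_inA ?kpart0 addr0.
Qed.

Lemma gseriesE N al u :
  gseries N al u = (inM u)%:P + \sum_(j < N.+1) 'X^j * (inA (Tt j al u))%:P.
Proof.
rewrite /gseries poly_def; congr (_ + _); apply: eq_bigr => j _.
by rewrite -mul_polyC commr_polyXn.
Qed.

Lemma gseries_trunc m N al u : (m <= N)%N -> eq_upto m (gseries N al u) (gseries m al u).
Proof. by move=> hmN i hi; rewrite !coef_gseries // (leq_trans hi hmN). Qed.

Lemma gseries_lin N al c u v :
  gseries N al (c *: u + v) = (inK c)%:P * gseries N al u + gseries N al v.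
Proof.
apply/polyP => i; rewrite [RHS]coefD coefCM !coefD !coefC !coef_poly.
case: ifP => _; case: ifP => _; rewrite ?mulr0 ?addr0 ?add0r ?inM_lin //.
- by rewrite (Tt_lin i al) inA_lin mulrDr; zmod_ac.
- by rewrite (Tt_lin i al) inA_lin.
- by rewrite mulr0.
Qed.

(* Coefficient of t^m in T^t_al(u).v + u.T^t_be(v) + H(T^t_al(u), T^t_be(v)). *)
Definition deform_arg al be u v m :=
  l (Tt m al u) v + r u (Tt m be v) + \sum_(j < m.+1) H (Tt j al u) (Tt (m - j) be v).

Lemma mpart_gseriesM n al be u v m : (m <= n)%N ->
  mpart ((gseries n al u * gseries n be v)`_m) = deform_arg al be u v m.
Proof.
move=> hm; rewrite coefM mpart_sum /deform_arg.
have hj (j : 'I_m.+1) : (j <= n)%N by apply: leq_trans hm; rewrite -ltnS.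
have hj' (j : 'I_m.+1) : (m - j <= n)%N by apply: leq_trans hm; apply: leq_subr.
rewrite (eq_bigr (fun j : 'I_m.+1 => l (Tt j al u) (if (m - j == 0)%N then v else 0)
   + r (if (nat_of_ord j == 0)%N then u else 0) (Tt (m - j) be v)
   + H (Tt j al u) (Tt (m - j) be v))); last first.
  by move=> j _; rewrite mpartM !kpart_gseries !scale0r !add0r !apart_gseries // !mpart_gseries.
rewrite !big_split /=; congr (_ + _ + _).
- rewrite big_ord_recr /= subnn /= big1 ?add0r // => j _.
  by rewrite subn_eq0 leqNgt ltn_ord /= (kbilin0r l_bilin).
- rewrite big_ord_recl /= subn0 /= big1 ?addr0 // => j _.
  by rewrite /bump /= (kbilin0l r_bilin).
Qed.

(* The deformation equation, read in sdp[t]. *)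
Lemma gseriesM n al be u v : eq_upto n (gseries n al u * gseries n be v)
  (\sum_(j < n.+1) 'X^j * gseries n (op al be) (deform_arg al be u v j)).
Proof.
move=> i hi; rewrite (coef_sum_XnM (fun j => gseries n (op al be) (deform_arg al be u v j))) //.
apply: sdp_eq.
- rewrite kpart_sum big1 => [|j _]; last exact: kpart_gseries.
  by rewrite coefM kpart_sum big1 // => j _; rewrite kpartM kpart_gseries mul0r.
- rewrite apart_sum (eq_bigr (fun j : 'I_i.+1 => Tt (i - j) (op al be) (deform_arg al be u v j)));
    last by move=> j _; rewrite apart_gseries // (leq_trans (leq_subr _ _) hi).
  rewrite (reindex_inj rev_ord_inj) /=.
  rewrite (eq_bigr (fun j : 'I_i.+1 => Tt j (op al be) (deform_arg al be u v (i - j))));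
    last by move=> j _; rewrite subSS subKn // -ltnS.
  case: HTt => _ [_ deform]; rewrite -deform coefM apart_sum; apply: eq_bigr => j _.
  have hj : (j <= n)%N by apply: leq_trans hi; rewrite -ltnS.
  rewrite apartM !kpart_gseries !scale0r !add0r !apart_gseries //.
  exact: leq_trans (leq_subr _ _) hi.
- rewrite mpart_sum big_ord_recr /= subnn mpart_gseries //= big1 ?add0r.
    exact: mpart_gseriesM.
  move=> j _; rewrite mpart_gseries; last exact: leq_trans (leq_subr _ _) hi.
  by rewrite subn_eq0 leqNgt ltn_ord.
Qed.

Definition cseries N (c : nat -> A) al u := uconj N (fun i => inA (c i)) (gseries N al u).
Definition obstruction N c al u := graph_defect al ((cseries N c al u)`_N).
Definition graph_upto n c := forall i, (i < n)%N -> forall al u, obstruction i c al u = 0.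

Lemma coef0_cseries N c al u : (cseries N c al u)`_0 = inA (T al u) + inM u.
Proof. by rewrite coef0_uconj coef0_gseries. Qed.

Lemma graph_defect_cseries0 N c al u : graph_defect al ((cseries N c al u)`_0) = 0.
Proof. by rewrite coef0_cseries /graph_defect; sdp_ring_simpl; rewrite subrr. Qed.

Lemma cseries_trunc i N c al u : (i <= N)%N -> (cseries N c al u)`_i = (cseries i c al u)`_i.
Proof. by move=> hi; apply: (uconj_trunc _ hi) => //; apply: gseries_trunc. Qed.

Lemma cseries_ext N c c' al u : (forall i, (0 < i <= N)%N -> c i = c' i) ->
  cseries N c al u = cseries N c' al u.
Proof. by move=> ecc'; apply: uconj_ext => i /ecc' ->. Qed.

Lemma cseries_lin N c al s u v :
  cseries N c al (s *: u + v) = (inK s)%:P * cseries N c al u + cseries N c al v.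
Proof. by rewrite /cseries gseries_lin uconjD uconj_CM //; apply: inK_central. Qed.

Lemma kpart_cseries N c al u i : kpart ((cseries N c al u)`_i) = 0.
Proof.
apply: (@coef_uconj_ideal _ (fun x => kpart x = 0)) => //.
- by move=> x y x0 y0; rewrite kpartD x0 y0 addr0.
- by move=> x y x0; rewrite kpartM x0 mul0r.
- by move=> x y y0; rewrite kpartM y0 mulr0.
- exact: kpart_gseries.
Qed.

Lemma apart_uconj_inM N (c : nat -> sdp) u i : apart ((uconj N c (inM u)%:P)`_i) = 0.
Proof.
suff : kpart ((uconj N c (inM u)%:P)`_i) = 0 /\ apart ((uconj N c (inM u)%:P)`_i) = 0.
  by case.
apply: (@coef_uconj_ideal _ (fun x => kpart x = 0 /\ apart x = 0)) => //.
- by move=> x y [x0 x0'] [y0 y0']; rewrite kpartD apartD x0 x0' y0 y0' !addr0.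
- by move=> x y [x0 x0']; rewrite kpartM apartM x0 x0' mul0r; sdp_simpl.
- by move=> x y [y0 y0']; rewrite kpartM apartM y0 y0' mulr0; sdp_simpl.
- by move=> j; rewrite coefC; case: ifP.
Qed.

Lemma obstruction_cseriesM n c al be u v : (0 < n)%N -> graph_upto n c ->
  graph_defect (op al be) ((cseries n c al u * cseries n c be v)`_n) =
    mulA (T al u) (obstruction n c be v)
    - T (op al be) (r u (obstruction n c be v) + H (T al u) (obstruction n c be v))
    + (mulA (obstruction n c al u) (T be v)
       - T (op al be) (l (obstruction n c al u) v + H (obstruction n c al u) (T be v))).
Proof.
move=> n_gt0 c_graph.
have low i N al' u' : (i < n)%N -> (i <= N)%N -> graph_defect al' ((cseries N c al' u')`_i) = 0.
  by move=> hin hiN; rewrite cseries_trunc //; apply: c_graph.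
case: n n_gt0 c_graph low => // m _ _ low.
rewrite coefM graph_defect_sum big_ord_recl big_ord_recr /= big1 ?add0r; last first.
  move=> i _; have i_lt : (i.+1 < m.+1)%N by rewrite ltnS.
  rewrite /bump leq0n add1n graph_defectM ?kpart_cseries // !low ?leq_subr ?ltn_subrL //.
    by bilin_expand; T_expand; rewrite ?addr0 ?subr0 ?oppr0.
  exact: ltnW.
rewrite /bump leq0n add1n subn0 subnn !graph_defectM ?kpart_cseries //.
rewrite !graph_defect_cseries0 -/(obstruction m.+1 c be v) -/(obstruction m.+1 c al u).
rewrite !coef0_cseries; sdp_ring_simpl; T_expand; zmod_ac.
Qed.

Lemma obstruction_gseriesM n c al be u v : (0 < n)%N -> graph_upto n c ->
  graph_defect (op al be) ((uconj n (fun i => inA (c i)) (gseries n al u * gseries n be v))`_n) =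
    obstruction n c (op al be) (deform_arg al be u v 0).
Proof.
move=> n_gt0 c_graph.
rewrite (uconj_trunc _ (leqnn n) (@gseriesM n al be u v)) // uconj_sum.
under eq_bigr do rewrite uconj_XnM.
rewrite (coef_sum_XnM (fun j => cseries n c (op al be) (deform_arg al be u v j))) //.
rewrite graph_defect_sum big_ord_recl /= subn0 big1 ?addr0 // => j _.
rewrite (cseries_trunc (N := n)) ?leq_subr //; apply: c_graph.
by rewrite /bump /= add1n ltn_subrL.
Qed.

Lemma obstruction_Z1 n c : (0 < n)%N -> graph_upto n c ->
  Z1 op mulA l r H T (obstruction n c).
Proof.
move=> n_gt0 c_graph; split.
  move=> al s u v.
  by rewrite /obstruction cseries_lin coefD coefCM graph_defectD graph_defect_inKM.
move=> al be u v.
have arg0 : deform_arg al be u v 0 = l (T al u) v + r u (T be v) + H (T al u) (T be v).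
  by rewrite /deform_arg big_ord1 !Tt0.
rewrite -arg0 -obstruction_gseriesM // -(uconjM _ _ _ (leqnn n)) obstruction_cseriesM //.
T_expand; zmod_ac.
Qed.

Lemma obstruction_update N c c' a al u : (0 < N)%N -> c' N = c N + a ->
  (forall i, (i < N)%N -> c' i = c i) ->
  obstruction N c' al u = obstruction N c al u - delta0 mulA l r H T a al u.
Proof.
move=> N_gt0 c'N c'_lt.
have inA_c'N : inA (c' N) = inA (c N) + inA a by rewrite c'N; apply: sdp_eq; sdp_ring_simpl.
have inA_c'_lt i : (i < N)%N -> inA (c' i) = inA (c i) by move=> /c'_lt ->.
rewrite /obstruction /cseries (coef_uconj_update N_gt0 inA_c'N inA_c'_lt) coef0_gseries.
rewrite /graph_defect /delta0; sdp_ring_simpl; T_expand; zmod_ac.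
Qed.

Definition phi_of c m (x : A) := apart ((uconj m (fun i => inA (c i)) (inA x)%:P)`_m).
Definition psi_of c m al u := mpart ((cseries m c al u)`_m).

Lemma apart_cseries n c al u :
  apart ((cseries n c al u)`_n) = \sum_(i < n.+1) phi_of c i (Tt (n - i) al u).
Proof.
rewrite /cseries gseriesE uconjD uconj_sum coefD apartD apart_uconj_inM add0r.
under eq_bigr do rewrite uconj_XnM.
rewrite (coef_sum_XnM (fun j => uconj n (fun i => inA (c i)) (inA (Tt j al u))%:P)) //.
rewrite apart_sum (reindex_inj rev_ord_inj) /=; apply: eq_bigr => j _.
have hjn : (j <= n)%N by rewrite -ltnS.
by rewrite subSS subKn // (uconj_trunc _ hjn (fun _ _ => erefl)).
Qed.

Lemma phi_of_lin c m : klinear (phi_of c m).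
Proof.
move=> s x y; rewrite /phi_of inA_lin polyCD polyCM uconjD uconj_CM; last exact: inK_central.
by rewrite coefD coefCM apartD apart_inKM.
Qed.

Lemma psi_of_lin c m al : klinear (psi_of c m al).
Proof. by move=> s u v; rewrite /psi_of cseries_lin coefD coefCM mpartD mpart_inKM. Qed.

Lemma phi_coef_of c i x : phi_coef mulA (c 1%N) (phi_of c) i x = phi_of c i x.
Proof.
case: i => [|[|i]] //=; rewrite /phi_of.
  by rewrite coef0_uconj coefC apart_inA.
by rewrite coef1_uconj // !coefC /=; sdp_ring_simpl; zmod_ac.
Qed.

Lemma psi_coef_of c i al u : psi_coef l r H T (c 1%N) (psi_of c) i al u = psi_of c i al u.
Proof.
case: i => [|[|i]] //=; rewrite /psi_of.
  by rewrite coef0_cseries mpartD mpart_inA mpart_inM add0r.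
rewrite coef1_uconj // coef0_gseries coef_gseries //=; sdp_ring_simpl; zmod_ac.
Qed.

Lemma equiv_trivial_of_graph c :
  (forall n al u, obstruction n c al u = 0) ->
  equiv_deformations mulA l r H T Tt (const_deformation 0 T).
Proof.
move=> c_graph; exists (c 1%N), (phi_of c), (psi_of c); split; [|split].
- by move=> i _; apply: phi_of_lin.
- by move=> i al _; apply: psi_of_lin.
move=> n al u; under eq_bigr do rewrite phi_coef_of.
rewrite -apart_cseries [RHS]big_ord_recl big1 ?addr0 //= subn0 psi_coef_of.
exact/subr0_eq/c_graph.
Qed.

Hypothesis H1z : H1_vanishes op mulA l r H T.

Definition coboundary_witness (f : Om -> M -> A) : A :=
  epsilon (inhabits 0) (fun a => forall al u, f al u = delta0 mulA l r H T a al u).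

Lemma coboundary_witnessP f : Z1 op mulA l r H T f ->
  forall al u, f al u = delta0 mulA l r H T (coboundary_witness f) al u.
Proof. by move=> /H1z f_B; apply: (epsilon_spec (inhabits 0) _ f_B). Qed.

(* [gauge n i] is the coefficient c_i (i <= n) chosen at stage n; stage n
   only sets c_n, to kill the order-n obstruction. *)
Fixpoint gauge n : nat -> A :=
  if n is n'.+1 then
    fun i => if i == n then coboundary_witness (obstruction n (gauge n')) else gauge n' i
  else fun=> 0.

Lemma gauge_gt n i : (n < i)%N -> gauge n i = 0.
Proof. by elim: n => [//|n IH] hi /=; rewrite (gtn_eqF hi) IH // ltnW. Qed.

Lemma gauge_stable m i : (i <= m)%N -> gauge m i = gauge i i.
Proof.
elim: m => [|m IH] hi; first by move: hi; rewrite leqn0 => /eqP ->.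
rewrite /=; case: eqP => [-> | ne]; first by rewrite /= eqxx.
apply: IH.
by move: hi; rewrite leq_eqVlt => /orP [/eqP /ne|].
Qed.

Lemma obstruction_gauge n al u : obstruction n (gauge n) al u = 0.
Proof.
elim/ltn_ind: n al u => -[_ al u|N IHN al u]; first exact: graph_defect_cseries0.
set c := gauge N.
have c_graph : graph_upto N.+1 c.
  move=> i hi al' u'; rewrite /obstruction (@cseries_ext i c (gauge i)); first exact: IHN.
  by move=> j /andP [_ hj]; rewrite /c (gauge_stable hj) gauge_stable // -ltnS (leq_ltn_trans hj).
rewrite (@obstruction_update _ c _ (coboundary_witness (obstruction N.+1 c))) //=.
- by rewrite -coboundary_witnessP ?subrr //; apply: obstruction_Z1.
- by rewrite eqxx /c gauge_gt // add0r.
- by move=> i hi; rewrite (ltn_eqF hi).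
Qed.

Lemma obstruction_gauge_diag n al u : obstruction n (fun i => gauge i i) al u = 0.
Proof.
rewrite /obstruction (@cseries_ext n _ (gauge n)); first exact: obstruction_gauge.
by move=> i /andP [_ hi]; rewrite gauge_stable.
Qed.

End Deformation.

End TwistedSemidirect.

Theorem theorem4p8 (k : fieldType) (Hchar : [pchar k] =i pred0)
  (Om : Type) (op : Om -> Om -> Om) (e : Om) (HOm : is_monoid op e)
  (A : lmodType k) (mulA : A -> A -> A) (HA : assoc_alg mulA)
  (M : lmodType k) (l : A -> M -> M) (r : M -> A -> M) (HM : bimodule mulA l r)
  (H : A -> A -> M) (HH : hoch_2cocycle mulA l r H)
  (T : Om -> M -> A) (HT : twisted_Oop_family op mulA l r H T)
  (H1zero : H1_vanishes op mulA l r H T) :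
  forall Tt : nat -> Om -> M -> A,
    formal_deformation op mulA l r H T Tt ->
    equiv_deformations mulA l r H T Tt (const_deformation 0 T).
Proof.
move=> Tt HTt.
exact (equiv_trivial_of_graph HTt (obstruction_gauge_diag HA HM HH HT HTt H1zero)).
Qed.
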